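(* Let $G_1 \le G_2$ be groups. Then $\nu(G_1) \le \nu(G_2)$, and equality holds if $[G_2 : G_1] < \infty$.
   Context: For a group $G$, the free subgroup rank is $\nu(G) = \max\{ n \ge 0 : (F_2)^n \text{ embeds into } G\} \in \mathbb{N}_0 \cup \{\infty\}$, where $F_2$ is the free group of rank two and $(F_2)^n$ is the $n$-fold direct product. *)

From mathcomp Require Import all_boot.
From Stdlib Require Import ClassicalEpsilon.
Set Implicit Arguments. Unset Strict Implicit. Unset Printing Implicit Defensive.

Record group := Group {
  carrier :> Type;
  gmul : carrier -> carrier -> carrier;
  gone : carrier;
  ginv : carrier -> carrier;
  gmulA : forall x y z, gmul x (gmul y z) = gmul (gmul x y) z;
  gmul1 : forall x, gmul gone x = x;
  gmulV : forall x, gmul (ginv x) x = gone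
}.

Definition is_subgroup (G : group) (H : G -> Prop) : Prop :=
  [/\ H (gone G),
      (forall x y, H x -> H y -> H (gmul x y)) &
      (forall x, H x -> H (ginv x))].

(* [G : H] < oo : finitely many left cosets t H cover G *)
Definition finite_index (G : group) (H : G -> Prop) : Prop :=
  exists s : list G, forall g : G, exists t, List.In t s /\ H (gmul (ginv t) g).

(* a letter (b, e): generator b (false = a, true = b), e = true means inverse *)
Definition letter := (bool * bool)%type.
Definition letter_inv (x : letter) : letter := (x.1, ~~ x.2).
Definition reduced (w : seq letter) : bool :=
  sorted (fun x y => y != letter_inv x) w.
Definition cons_red (x : letter) (w : seq letter) : seq letter :=
  if w is y :: w' then (if y == letter_inv x then w' else x :: w) else [:: x].
Definition reduce (w : seq letter) : seq letter := foldr cons_red [::] w.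
(* elements of (F_2)^n : n-tuples of reduced words, componentwise product *)
Definition F2n_elt n (u : {ffun 'I_n -> seq letter}) : Prop :=
  forall i, reduced (u i).
Definition F2n_mul n (u v : {ffun 'I_n -> seq letter}) : {ffun 'I_n -> seq letter} :=
  [ffun i => reduce (u i ++ v i)].

Definition embeds (n : nat) (G : group) (H : G -> Prop) : Prop :=
  exists f : {ffun 'I_n -> seq letter} -> G,
    [/\ (forall u, F2n_elt u -> H (f u)),
        (forall u v, F2n_elt u -> F2n_elt v -> f (F2n_mul u v) = gmul (f u) (f v)) &
        (forall u v, F2n_elt u -> F2n_elt v -> f u = f v -> u = v)].

Lemma embeds0 (G : group) (H : G -> Prop) : is_subgroup H -> embeds 0 H.
Proof.
case=> H1 _ _; exists (fun _ => gone G); split=> //.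
  by move=> u v _ _; rewrite gmul1.
by move=> u v _ _ _; apply/ffunP => -[].
Qed.

(* ---------- free subgroup rank, valued in N u {oo} (None = oo) ---------- *)
Definition embedsb n (G : group) (H : G -> Prop) : bool :=
  if excluded_middle_informative (embeds n H) then true else false.

Lemma embedsbP n (G : group) (H : G -> Prop) : embedsb n H <-> embeds n H.
Proof. by rewrite /embedsb; case: excluded_middle_informative. Qed.

Definition nu (G : group) (H : G -> Prop) (sH : is_subgroup H) : option nat :=
  match excluded_middle_informative
          (exists m, forall n, embeds n H -> n <= m) with
  | left hb =>
      let ex : exists n, embedsb n H :=
        ex_intro _ 0 (proj2 (embedsbP 0 H) (embeds0 sH)) in
      let bd : forall n, embedsb n H -> n <= projT1 (constructive_indefinite_description _ hb) :=
        fun n hn => projT2 (constructive_indefinite_description _ hb) n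
                      (proj1 (embedsbP n H) hn) in
      Some (ex_maxn ex bd)
  | right _ => None
  end.

Definition le_ext (a b : option nat) : Prop :=
  match a, b with
  | _, None => True
  | None, Some _ => False
  | Some m, Some n => m <= n
  end.

(* Monotonicity is immediate, since an embedding into G1 is one into G2.  If
   [G2 : G1] is finite, pigeonhole on the cosets of 1, g, ..., g^N (N the number
   of cosets) puts g^d in G1 for some 0 < d <= N, hence g^K in G1 for K = N! and
   every g.  Precomposing an embedding (F_2)^n -> G2 with the injective
   endomorphism of (F_2)^n raising every generator to the K-th power gives a
   homomorphism whose image is generated by K-th powers, so it embeds (F_2)^n
   into G1. *)

From mathcomp Require Import all_boot.
From Stdlib Require Import ClassicalEpsilon.
Set Implicit Arguments. Unset Strict Implicit. Unset Printing Implicit Defensive.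

Lemma letter_inv_neq (x : letter) : x != letter_inv x.
Proof. by case: x => a []; rewrite /letter_inv /= xpair_eqE eqxx. Qed.

Lemma reduced_cons x w : reduced (x :: w) = (head x w != letter_inv x) && reduced w.
Proof. by case: w => [|y w] //=; rewrite letter_inv_neq. Qed.

Lemma cons_red_id x w : head x w != letter_inv x -> cons_red x w = x :: w.
Proof. by case: w => //= y w /negbTE ->. Qed.

Lemma reduce_id w : reduced w -> reduce w = w.
Proof.
elim: w => // x w IHw; rewrite reduced_cons => /andP[xw rw] /=.
by rewrite -/(reduce w) IHw // cons_red_id.
Qed.

Lemma reduce_cat a b : reduce (a ++ b) = foldr cons_red (reduce b) a.
Proof. exact: foldr_cat. Qed.

Lemma reduced_nseq_cat x k t :
  head x t != letter_inv x -> reduced t -> reduced (nseq k x ++ t).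
Proof.
move=> xt rt; elim: k => [|k IHk] //.
by rewrite [_ ++ _]/= reduced_cons IHk andbT; case: k {IHk} => //=; rewrite letter_inv_neq.
Qed.

Lemma reduced_nseq x k : reduced (nseq k x).
Proof. by rewrite -[nseq k x]cats0 reduced_nseq_cat ?letter_inv_neq. Qed.

Lemma foldr_cons_red_nseq x k t :
  head x t != letter_inv x -> foldr cons_red t (nseq k x) = nseq k x ++ t.
Proof.
move=> xt; elim: k => [|k IHk] //=; rewrite IHk cons_red_id //.
by case: k {IHk} => //=; rewrite letter_inv_neq.
Qed.

Lemma foldr_cons_red_nseq_inv x k t :
  foldr cons_red (nseq k (letter_inv x) ++ t) (nseq k x) = t.
Proof.
elim: k t => [|k IHk] t //=.
have -> : letter_inv x :: nseq k (letter_inv x) ++ t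
          = nseq k (letter_inv x) ++ letter_inv x :: t.
  by elim: k {IHk} => //= k ->.
by rewrite IHk /= eqxx.
Qed.

(* The image of [w] under the endomorphism of [F_2] sending each generator to its [K]-th power. *)
Definition gen_pow (K : nat) (w : seq letter) : seq letter := flatten (map (nseq K) w).

Lemma gen_pow_cons K x w : gen_pow K (x :: w) = nseq K x ++ gen_pow K w.
Proof. by []. Qed.

Lemma gen_pow_cat K a b : gen_pow K (a ++ b) = gen_pow K a ++ gen_pow K b.
Proof. by rewrite /gen_pow map_cat flatten_cat. Qed.

Section GenPow.

Variable K : nat.
Hypothesis K_gt0 : 0 < K.

Lemma reduced_gen_pow w : reduced w -> reduced (gen_pow K w).
Proof.
case: K K_gt0 => // K' _; elim: w => // x w IHw.
rewrite reduced_cons => /andP[xw rw]; rewrite gen_pow_cons reduced_nseq_cat ?IHw //.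
by case: w xw {IHw rw}.
Qed.

Lemma foldr_cons_red_gen_pow x w :
  foldr cons_red (gen_pow K w) (nseq K x) = gen_pow K (cons_red x w).
Proof.
case: w => [|y w]; first by rewrite foldr_cons_red_nseq ?letter_inv_neq.
rewrite /=; case: eqP => [->|/eqP yx]; first by rewrite gen_pow_cons foldr_cons_red_nseq_inv.
by rewrite !gen_pow_cons foldr_cons_red_nseq //; case: K K_gt0.
Qed.

Lemma gen_pow_reduce w : gen_pow K (reduce w) = reduce (gen_pow K w).
Proof.
elim: w => // x w IHw.
by rewrite gen_pow_cons reduce_cat -IHw foldr_cons_red_gen_pow.
Qed.

Lemma gen_pow_inj : injective (gen_pow K).
Proof.
elim=> [|x a IHa] [|y b] //; rewrite ?gen_pow_cons; try by case: K K_gt0.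
move/eqP; rewrite eqseq_cat ?size_nseq // => /andP[/eqP xy /eqP ab].
by rewrite (IHa _ ab); case: K K_gt0 xy => // K' _ [->].
Qed.

End GenPow.

Lemma In_nth (T : Type) (x0 t : T) s :
  List.In t s -> exists2 i, i < size s & nth x0 s i = t.
Proof.
elim: s => //= x s IHs [<-|/IHs [i lt_is <-]]; first by exists 0.
by exists i.+1.
Qed.

Section GroupFacts.

Variable G : group.

Lemma gmulK (x y : G) : gmul (ginv x) (gmul x y) = y.
Proof. by rewrite gmulA gmulV gmul1. Qed.

Lemma gmul_idem (x : G) : gmul x x = x -> x = gone G.
Proof. by move=> xx; rewrite -(gmulV x) -{3}xx gmulK. Qed.

Definition gpow (g : G) (k : nat) : G := iter k (gmul g) (gone G).

Lemma gpowD (g : G) a b : gpow g (a + b) = gmul (gpow g a) (gpow g b).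
Proof.
elim: a => [|a IHa]; first by rewrite gmul1.
by rewrite addSn /gpow /= -/(gpow g _) IHa gmulA.
Qed.

Lemma gpowM (g : G) a b : gpow g (a * b) = gpow (gpow g a) b.
Proof. by elim: b => [|b IHb]; rewrite ?muln0 // mulnS gpowD IHb. Qed.

Variable H : G -> Prop.
Hypothesis sH : is_subgroup H.

Lemma subgroup_gpow g k : H g -> H (gpow g k).
Proof. by case: sH => H1 HM _ Hg; elim: k => //= k; apply: HM. Qed.

(* [g^(j-i) = (t^-1 g^i)^-1 (t^-1 g^j)] *)
Lemma coset_gpow_sub t g i j : i <= j ->
  H (gmul (ginv t) (gpow g i)) -> H (gmul (ginv t) (gpow g j)) -> H (gpow g (j - i)).
Proof.
case: sH => _ HM HV le_ij Hi Hj.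
rewrite -(gmulK (gmul (ginv t) (gpow g i)) (gpow g (j - i))) -gmulA -gpowD subnKC //.
exact: HM (HV _ Hi) Hj.
Qed.

Lemma finite_index_gpow_bounded : finite_index H ->
  exists N, forall g, exists2 d, 0 < d <= N & H (gpow g d).
Proof.
case=> s cover; exists (size s) => g.
have /fin_all_exists [c Hc] : forall k : 'I_(size s).+1,
    exists i : 'I_(size s), H (gmul (ginv (nth (gone G) s i)) (gpow g k)).
  move=> k; have [t [/(In_nth (gone G)) [i lt_is <-] Ht]] := cover (gpow g k).
  by exists (Ordinal lt_is).
have /injectivePn [k [l ne_kl c_kl]] : ~~ injectiveb c.
  by apply/injectiveP => /leq_card; rewrite !card_ord ltnn.
wlog lt_kl : k l ne_kl c_kl / k < l.
  move=> wlog_kl; case: (ltngtP k l) => [|lt_lk|/val_inj eq_kl]; first exact: wlog_kl.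
  - by apply: (wlog_kl l k); rewrite 1?eq_sym.
  - by rewrite eq_kl eqxx in ne_kl.
exists (l - k); first by rewrite subn_gt0 lt_kl (leq_trans (leq_subr k l)) // -ltnS.
by apply: (coset_gpow_sub (ltnW lt_kl) (Hc k)); rewrite c_kl.
Qed.

Lemma finite_index_gpow : finite_index H -> exists2 K, 0 < K & forall g, H (gpow g K).
Proof.
case/finite_index_gpow_bounded => N bounded; exists N`!; first exact: fact_gt0.
move=> g; have [d d_bound Hd] := bounded g.
by have /dvdnP [q ->] := dvdn_fact d_bound; rewrite mulnC gpowM; apply: subgroup_gpow.
Qed.

End GroupFacts.

Section F2n.

Variable n : nat.
Local Notation F2n := {ffun 'I_n -> seq letter}.

Definition F2n_one : F2n := [ffun => [::]].
Definition F2n_at (i : 'I_n) (w : seq letter) : F2n :=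
  [ffun j => if j == i then w else [::]].
Definition F2n_set (u : F2n) (i : 'I_n) (w : seq letter) : F2n :=
  [ffun j => if j == i then w else u j].

Lemma F2n_elt_at i w : reduced w -> F2n_elt (F2n_at i w).
Proof. by move=> rw j; rewrite ffunE; case: eqP. Qed.

Lemma F2n_elt_set u i w : F2n_elt u -> reduced w -> F2n_elt (F2n_set u i w).
Proof. by move=> eu rw j; rewrite ffunE; case: eqP. Qed.

Lemma F2n_at_nseqS i x k :
  F2n_at i (nseq k.+1 x) = F2n_mul (F2n_at i [:: x]) (F2n_at i (nseq k x)).
Proof.
apply/ffunP => j; rewrite !ffunE; case: eqP => // _.
by rewrite reduce_id //; apply: (reduced_nseq x k.+1).
Qed.

Lemma F2n_mul_at_set (u : F2n) i x w : F2n_elt u -> u i = x :: w ->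
  u = F2n_mul (F2n_at i [:: x]) (F2n_set u i w).
Proof.
move=> eu uiE; apply/ffunP => j; rewrite !ffunE.
by case: eqP => [->|_]; rewrite ?cat1s ?cat0s -?uiE reduce_id //; apply: eu.
Qed.

Lemma size_F2n_set (u : F2n) i x w : u i = x :: w ->
  \sum_j size (F2n_set u i w j) < \sum_j size (u j).
Proof.
move=> uiE; rewrite [ltnRHS](bigD1 i) //= (bigD1 i) //= uiE ffunE eqxx /=.
rewrite addSn ltnS leq_add2l; apply/eq_leq/eq_bigr => j /negbTE ne_ji.
by rewrite ffunE ne_ji.
Qed.

Section Homomorphism.

Variables (G : group) (f : F2n -> G).
Hypothesis fM : forall u v, F2n_elt u -> F2n_elt v -> f (F2n_mul u v) = gmul (f u) (f v).

Lemma F2n_elt_one : F2n_elt F2n_one.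
Proof. by move=> i; rewrite ffunE. Qed.

Lemma F2n_hom_one : f F2n_one = gone G.
Proof.
apply: gmul_idem; rewrite -fM; try exact: F2n_elt_one.
by congr f; apply/ffunP => i; rewrite !ffunE.
Qed.

Lemma F2n_hom_at_nseq i x k : f (F2n_at i (nseq k x)) = gpow (f (F2n_at i [:: x])) k.
Proof.
elim: k => [|k IHk].
  rewrite [RHS]/gpow /= -F2n_hom_one.
  by congr f; apply/ffunP => j; rewrite !ffunE; case: eqP.
by rewrite F2n_at_nseqS fM ?IHk //; apply: F2n_elt_at; rewrite ?reduced_nseq.
Qed.

Lemma F2n_hom_range (H : G -> Prop) : is_subgroup H ->
  (forall i x, H (f (F2n_at i [:: x]))) -> forall u, F2n_elt u -> H (f u).
Proof.
move=> sH Hgen u; have [N] := ubnP (\sum_j size (u j)).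
elim: N u => // N IHN u size_u eu.
case: (pickP (fun i => u i != [::])) => [i | u_nil]; last first.
  have -> : u = F2n_one by apply/ffunP => i; rewrite ffunE; apply/eqP/negbFE/u_nil.
  by rewrite F2n_hom_one; case: sH.
case uiE: (u i) => [|x w] // _.
have rw : reduced w by move: (eu i); rewrite uiE reduced_cons => /andP[].
have eu' := F2n_elt_set i eu rw.
rewrite (F2n_mul_at_set eu uiE) fM //; last exact: F2n_elt_at.
case: sH => _ HM _; apply: HM => //; apply: IHN => //.
exact: leq_trans (size_F2n_set uiE) size_u.
Qed.

End Homomorphism.

Definition F2n_gen_pow (K : nat) (u : F2n) : F2n := [ffun i => gen_pow K (u i)].

Variable K : nat.
Hypothesis K_gt0 : 0 < K.

Lemma F2n_elt_gen_pow u : F2n_elt u -> F2n_elt (F2n_gen_pow K u).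
Proof. by move=> eu i; rewrite ffunE reduced_gen_pow. Qed.

Lemma F2n_gen_pow_mul u v :
  F2n_gen_pow K (F2n_mul u v) = F2n_mul (F2n_gen_pow K u) (F2n_gen_pow K v).
Proof. by apply/ffunP => i; rewrite !ffunE gen_pow_reduce // gen_pow_cat. Qed.

Lemma F2n_gen_pow_inj : injective (F2n_gen_pow K).
Proof.
move=> u v /ffunP uv; apply/ffunP => i.
by apply: (gen_pow_inj K_gt0); have := uv i; rewrite !ffunE.
Qed.

Lemma F2n_gen_pow_at i x : F2n_gen_pow K (F2n_at i [:: x]) = F2n_at i (nseq K x).
Proof. by apply/ffunP => j; rewrite !ffunE; case: eqP; rewrite // gen_pow_cons cats0. Qed.

End F2n.

Lemma embeds_sub n (G : group) (H H' : G -> Prop) :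
  (forall g, H g -> H' g) -> embeds n H -> embeds n H'.
Proof. by move=> HH' [f [Hf fM f_inj]]; exists f; split=> // u /Hf /HH'. Qed.

Lemma embeds_finite_index n (G : group) (H : G -> Prop) : is_subgroup H ->
  finite_index H -> embeds n (fun _ : G => True) -> embeds n H.
Proof.
move=> sH /(finite_index_gpow sH) [K K_gt0 HK] [f [_ fM f_inj]].
have eK (u : {ffun 'I_n -> seq letter}) : F2n_elt u -> F2n_elt (F2n_gen_pow K u).
  exact: F2n_elt_gen_pow.
have fKM u v : F2n_elt u -> F2n_elt v -> f (F2n_gen_pow K (F2n_mul u v))
    = gmul (f (F2n_gen_pow K u)) (f (F2n_gen_pow K v)).
  by move=> eu ev; rewrite F2n_gen_pow_mul // fM //; apply: eK.
exists (fun u => f (F2n_gen_pow K u)); split=> //.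
- apply: F2n_hom_range fKM _ sH _ => i x.
  by rewrite F2n_gen_pow_at // (F2n_hom_at_nseq fM); apply: HK.
- by move=> u v eu ev /(f_inj _ _ (eK _ eu) (eK _ ev)) /(F2n_gen_pow_inj K_gt0).
Qed.

Lemma nu_someP (G : group) (H : G -> Prop) (sH : is_subgroup H) m :
  nu sH = Some m -> embeds m H /\ forall n, embeds n H -> n <= m.
Proof.
rewrite /nu; case: excluded_middle_informative => // bounded [<-].
by case: ex_maxnP => k /embedsbP Hk k_max; split=> // n /embedsbP /k_max.
Qed.

Lemma nu_noneP (G : group) (H : G -> Prop) (sH : is_subgroup H) :
  nu sH = None -> ~ exists m, forall n, embeds n H -> n <= m.
Proof. by rewrite /nu; case: excluded_middle_informative. Qed.

Lemma nu_le (G1 G2 : group) (H1 : G1 -> Prop) (H2 : G2 -> Prop)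
    (sH1 : is_subgroup H1) (sH2 : is_subgroup H2) :
  (forall n, embeds n H1 -> embeds n H2) -> le_ext (nu sH1) (nu sH2).
Proof.
move=> H12; case nu1: (nu sH1) => [m1|]; case nu2: (nu sH2) => [m2|] //=.
  exact: (nu_someP nu2).2 _ (H12 _ (nu_someP nu1).1).
apply: (nu_noneP nu1); exists m2 => n /H12; exact: (nu_someP nu2).2.
Qed.

Lemma le_ext_anti a b : le_ext a b -> le_ext b a -> a = b.
Proof. by case: a b => [a|] [b|] //= ab ba; rewrite (@anti_leq a b) ?ab. Qed.

Unset Implicit Arguments.

Theorem lemma2p2 (G2 : group) (G1 : G2 -> Prop) (sG1 : is_subgroup G1)
    (sG2 : is_subgroup (fun _ : G2 => True)) :
  le_ext (nu sG1) (nu sG2) /\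
  (finite_index G1 -> nu sG1 = nu sG2).
Proof.
have nu_mono : le_ext (nu sG1) (nu sG2) by apply: nu_le => n; apply: embeds_sub.
split=> // fin_G1; apply: le_ext_anti nu_mono _.
by apply: nu_le => n; apply: embeds_finite_index.
Qed.
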